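(* Let $X$ be a $T_1$ space, $\mathcal C$ a pre-pseudogroup on $X$, and $f\in\mathcal C(U,V)$. Then the underlying map $\bar f:U\to V$ is continuous; moreover it is a local homeomorphism.
   Context: $X_{top}$ denotes the set of open subsets of $X$, regarded as a category with exactly one morphism $U\to V$ iff $U\subseteq V$. Let $\mathcal C$ be a small category with $\mathrm{Ob}(\mathcal C)=X_{top}$ containing $X_{top}$ as a subcategory (identity on objects). For each open $V$, $\mathcal C(-,V)$ is a presheaf of sets on $X$ (restriction along $U'\subseteq U$ = precomposition with the inclusion morphism). For $x\in X$ let $\mathcal C_x(V)=\operatorname{colim}_{U\ni x}\mathcal C(U,V)$ (germ of $f\in\mathcal C(U,V)$ at $x$ written $f_x$); postcomposition with inclusions makes this functorial in $V$, and for $y\in X$ let $\mathcal C_x^y=\lim_{V\ni y}\mathcal C_x(V)$ (limit over open neighbourhoods of $y$), with projections $\mathcal C_x^y\to\mathcal C_x(V)$. Composition in $\mathcal C$ induces $\mathcal C_y^z\times\mathcal C_x^y\to\mathcal C_x^z$: given $\varphi\in\mathcal C_x^y,\psi\in\mathcal C_y^z$ and open $W\ni z$, choose $g\in\mathcal C(V,W)$, $y\in V$, representing the component $\psi_W$, and $f\in\mathcal C(U,V)$ representing $\varphi_V$; the $W$-component of $\psi\circ\varphi$ is $(g\circ f)_x$. This defines a category $\mathcal C^\star$ with objects the points of $X$ and $\mathcal C^\star(x,y)=\mathcal C_x^y$. For $X$ a $T_1$ space, a pre-pseudogroup on $X$ is such a $\mathcal C$ satisfying: (1) $\mathrm{Ob}(\mathcal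 C)=\mathrm{Ob}(X_{top})$; (2) for every open $V$ and $x\in X$, the map $\coprod_{y\in V}\mathcal C_x^y\to\mathcal C_x(V)$ induced by the projections is a bijection; (3) $\mathcal C^\star$ is a groupoid. Underlying map: for $f\in\mathcal C(U,V)$ and $x\in U$, by (2) there is a unique $y\in V$ such that the germ $f_x\in\mathcal C_x(V)$ lies in the image of $\mathcal C_x^y$; set $\bar f(x)=y$. This gives a map $\bar f:U\to V$. *)

From Stdlib Require Import Classical.

Record Topology (X : Type) := {
  is_open : (X -> Prop) -> Prop;
  open_full : is_open (fun _ => True);
  open_inter : forall U V, is_open U -> is_open V -> is_open (fun x => U x /\ V x);
  open_union : forall (I : Type) (F : I -> X -> Prop),
      (forall i, is_open (F i)) -> is_open (fun x => exists i, F i x)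
}.
Arguments is_open {X} _ _.

Definition T1 {X : Type} (T : Topology X) : Prop :=
  forall x y : X, x <> y -> exists U, is_open T U /\ U x /\ ~ U y.

Record Opn {X : Type} (T : Topology X) := {
  carrier :> X -> Prop;
  carrier_open : is_open T carrier
}.
Arguments carrier {X T} _ _.

Definition sub {X : Type} {T : Topology X} (U V : Opn T) : Prop :=
  forall x, U x -> V x.

Record PCat {X : Type} (T : Topology X) := {
  hom : Opn T -> Opn T -> Type;
  comp : forall U V W : Opn T, hom V W -> hom U V -> hom U W;
  cid : forall U : Opn T, hom U U;
  comp_assoc : forall U V W Z (h : hom W Z) (g : hom V W) (f : hom U V),
      comp U W Z h (comp U V W g f) = comp U V Z (comp V W Z h g) f;
  comp_id_l : forall U V (f : hom U V), comp U V V (cid V) f = f;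
  comp_id_r : forall U V (f : hom U V), comp U U V f (cid U) = f;
  incl : forall U V : Opn T, sub U V -> hom U V;
  incl_id : forall U (H : sub U U), incl U U H = cid U;
  incl_comp : forall U V W (H1 : sub U V) (H2 : sub V W) (H3 : sub U W),
      comp U V W (incl V W H2) (incl U V H1) = incl U W H3
}.
Arguments hom {X T} _ _ _.
Arguments comp {X T} _ {U V W} _ _.
Arguments cid {X T} _ _.
Arguments incl {X T} _ {U V} _.

Section Germs.
Context {X : Type} {T : Topology X} (C : PCat T).

(* A representative (U, x ∈ U, f ∈ C(U,V)) of a germ in C_x(V). *)
Record Germ (x : X) (V : Opn T) := mkGerm {
  gdom : Opn T;
  gpt : gdom x;
  gmap : hom C gdom V
}.
Arguments mkGerm {x V} gdom gpt gmap.
Arguments gdom {x V} _.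
Arguments gpt {x V} _.
Arguments gmap {x V} _.

(* Equality in the filtered colimit C_x(V) = colim_{U ∋ x} C(U,V). *)
Definition germ_eq {x : X} {V : Opn T} (g1 g2 : Germ x V) : Prop :=
  exists W : Opn T, W x /\
    exists (H1 : sub W (gdom g1)) (H2 : sub W (gdom g2)),
      comp C (gmap g1) (incl C H1) = comp C (gmap g2) (incl C H2).

Definition germ_post {x : X} {V V' : Opn T} (H : sub V V') (g : Germ x V) : Germ x V' :=
  mkGerm (gdom g) (gpt g) (comp C (incl C H) (gmap g)).

(* Elements of C_x^y = lim_{V ∋ y} C_x(V): compatible families of germs. *)
Record Costalk (x y : X) := {
  cs : forall V : Opn T, V y -> Germ x V;
  cs_compat : forall (V V' : Opn T) (hV : V y) (hV' : V' y) (H : sub V V'),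
      germ_eq (germ_post H (cs V hV)) (cs V' hV')
}.
Arguments cs {x y} _ _ _.

Definition cs_eq {x y : X} (p q : Costalk x y) : Prop :=
  forall (V : Opn T) (hV : V y), germ_eq (cs p V hV) (cs q V hV).

(* W-component of the composite psi ∘ phi in C^*, computed on representatives. *)
Definition star_comp_at {x y z : X} (psi : Costalk y z) (phi : Costalk x y)
    (W : Opn T) (hW : W z) : Germ x W :=
  let g := cs psi W hW in
  let f := cs phi (gdom g) (gpt g) in
  mkGerm (gdom f) (gpt f) (comp C (gmap g) (gmap f)).

Definition star_id_at (x : X) (W : Opn T) (hW : W x) : Germ x W :=
  mkGerm W hW (cid C W).

(* Condition (2): the map  ∐_{y ∈ V} C_x^y -> C_x(V)  is a bijection. *)
Definition cond2 : Prop :=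
  forall (V : Opn T) (x : X),
    (forall g : Germ x V, exists (y : X) (hy : V y) (p : Costalk x y),
        germ_eq (cs p V hy) g) /\
    (forall (y y' : X) (hy : V y) (hy' : V y') (p : Costalk x y) (p' : Costalk x y'),
        germ_eq (cs p V hy) (cs p' V hy') -> y = y') /\
    (forall (y : X) (hy : V y) (p p' : Costalk x y),
        germ_eq (cs p V hy) (cs p' V hy) -> cs_eq p p').

(* Condition (3): C^* is a groupoid (every morphism is invertible). *)
Definition cond3 : Prop :=
  forall (x y : X) (p : Costalk x y), exists q : Costalk y x,
    (forall (W : Opn T) (hW : W x), germ_eq (star_comp_at q p W hW) (star_id_at x W hW)) /\
    (forall (W : Opn T) (hW : W y), germ_eq (star_comp_at p q W hW) (star_id_at y W hW)).

(* Condition (1) Ob(C) = Ob(X_top) holds by construction of PCat. *)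
Definition pre_pseudogroup : Prop := cond2 /\ cond3.

(* g : X -> X is (on U) the underlying map of f ∈ C(U,V):
   for x ∈ U, g x is the y ∈ V such that the germ f_x ∈ C_x(V) lies in the
   image of C_x^y. *)
Definition underlying_map {U V : Opn T} (f : hom C U V) (g : X -> X) : Prop :=
  forall (x : X) (hx : U x), exists (hy : V (g x)) (p : Costalk x (g x)),
    germ_eq (cs p V hy) (mkGerm U hx f).

End Germs.

Definition continuous_on {X : Type} (T : Topology X) (U V : X -> Prop) (g : X -> X) : Prop :=
  (forall x, U x -> V (g x)) /\
  forall W, is_open T W -> is_open T (fun x => U x /\ W (g x)).

Definition local_homeo {X : Type} (T : Topology X) (U V : X -> Prop) (g : X -> X) : Prop :=
  (forall x, U x -> V (g x)) /\
  forall x, U x -> exists U' : X -> Prop,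
    is_open T U' /\ U' x /\ (forall z, U' z -> U z) /\
    let I := fun y => exists z, U' z /\ g z = y in
    is_open T I /\
    exists h : X -> X,
      (forall z, U' z -> h (g z) = z) /\
      (forall y, I y -> U' (h y) /\ g (h y) = y) /\
      (forall W, is_open T W -> is_open T (fun z => U' z /\ W (g z))) /\
      (forall W, is_open T W -> is_open T (fun y => I y /\ W (h y))).

(* For a germ g in C_x(E), write "g lies over v" when g is in the image of C_x^v;
   for a ∈ C(D,E), "a maps z to v" when the germ a_z lies over v, so that the
   underlying map ā of a is the function z ↦ v.  Condition (2) makes ā a
   well-defined function, and the proof rests on three of its properties:
   - locality: germs that agree at x agree (hence have the same underlying
     values) on a neighbourhood of x, and a germ lying over v ∈ N ⊆ E factors
     through N; this gives continuity of ā;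
   - functoriality: the underlying map of h ∘ k is h̄ ∘ k̄ (this uses T1);
   - inverses: if p ∈ C_x^y is represented near x by f, its inverse q ∈ C_y^x
     (condition (3)) is represented near y by some k, and functoriality applied
     to q ∘ p = 1_x and p ∘ q = 1_y shows that k̄ inverts f̄ on neighbourhoods
     of x and of y = f̄(x).
   A purely topological lemma then turns two continuous maps which are inverse
   to each other on such neighbourhoods into a local homeomorphism. *)

From Stdlib Require Import Classical FunctionalExtensionality PropExtensionality IndefiniteDescription.

Section Topology.
Context {X : Type} (T : Topology X).

Lemma open_ext (P Q : X -> Prop) : (forall x, P x <-> Q x) -> is_open T P -> is_open T Q.
Proof.
  intros HPQ HP.
  assert (E : P = Q).
  { apply functional_extensionality; intro x; apply propositional_extensionality; auto. }
  now rewrite <- E.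
Qed.

Lemma open_local (P : X -> Prop) :
  (forall z, P z -> exists O : X -> Prop, is_open T O /\ O z /\ forall z', O z' -> P z') ->
  is_open T P.
Proof.
  intros Hloc.
  set (I := {O : X -> Prop | is_open T O /\ forall z', O z' -> P z'}).
  apply (open_ext (fun x => exists i : I, proj1_sig i x)).
  - intro x; split.
    + intros [i Hx]; exact (proj2 (proj2_sig i) x Hx).
    + intros Hx. destruct (Hloc x Hx) as [O [HO [HOx HOP]]].
      exists (exist _ O (conj HO HOP)); exact HOx.
  - apply open_union; intro i; exact (proj1 (proj2_sig i)).
Qed.

Definition opn_inter (A B : Opn T) : Opn T :=
  Build_Opn X T (fun x => A x /\ B x)
    (open_inter X T A B (carrier_open T A) (carrier_open T B)).

Definition preimages_open (D : X -> Prop) (g : X -> X) : Prop :=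
  forall W, is_open T W -> is_open T (fun z => D z /\ W (g z)).

(* If g (continuous on U) and beta (continuous on D) are mutually inverse on
   open sets N ∋ x and M ∋ g x, then g is a local homeomorphism at x: take
   U' = N ∩ g⁻¹(M), whose image is exactly M, with local inverse beta. *)
Lemma local_inverse_homeo (U D N M : X -> Prop) (g beta : X -> X) (x : X) :
  preimages_open U g -> preimages_open D beta ->
  is_open T N -> is_open T M -> N x -> M (g x) ->
  (forall z, N z -> U z) -> (forall w, M w -> D w) ->
  (forall z, N z -> beta (g z) = z) ->
  (forall w, M w -> N (beta w) /\ g (beta w) = w) ->
  exists U' : X -> Prop,
    is_open T U' /\ U' x /\ (forall z, U' z -> U z) /\
    let I := fun y => exists z, U' z /\ g z = y in
    is_open T I /\
    exists h : X -> X,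
      (forall z, U' z -> h (g z) = z) /\
      (forall y, I y -> U' (h y) /\ g (h y) = y) /\
      (forall W, is_open T W -> is_open T (fun z => U' z /\ W (g z))) /\
      (forall W, is_open T W -> is_open T (fun y => I y /\ W (h y))).
Proof.
  intros Hg Hbeta HN HM Nx Mgx NU MD Hleft Hright.
  set (U' := fun z => N z /\ M (g z)).
  assert (Himage : forall w, (exists z, U' z /\ g z = w) <-> M w).
  { intro w; split.
    - intros [z [[_ Mz] <-]]; exact Mz.
    - intros Mw. destruct (Hright w Mw) as [Nb Eb].
      exists (beta w); split; [split; [|rewrite Eb]|]; auto. }
  assert (Hdom : forall W, is_open T W -> is_open T (fun z => U' z /\ W (g z))).
  { intros W HW. apply (open_ext (fun z => N z /\ (U z /\ (M (g z) /\ W (g z))))).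
    - intro z; unfold U'; split; [tauto|]. intros [[Nz Mz] Wz]; auto.
    - apply open_inter; [exact HN|apply (Hg (fun w => M w /\ W w)), open_inter; auto]. }
  exists U'; cbv zeta.
  split; [apply (open_ext (fun z => U' z /\ True)); [tauto|apply (Hdom (fun _ => True)), open_full]|].
  split; [split; auto|].
  split; [intros z [Nz _]; auto|].
  split; [apply (open_ext M); [intro w; symmetry; apply Himage|exact HM]|].
  exists beta.
  split; [intros z [Nz _]; auto|].
  split.
  { intros w Iw. apply Himage in Iw. destruct (Hright w Iw) as [Nb Eb].
    split; [split; [|rewrite Eb]|]; auto. }
  split; [exact Hdom|].
  intros W HW. apply (open_ext (fun w => M w /\ (D w /\ W (beta w)))).
  - intro w; rewrite Himage; split; [tauto|]. intros [Mw Wb]; auto.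
  - apply open_inter; [exact HM|apply Hbeta, HW].
Qed.

End Topology.

Arguments mkGerm {X T} C {x V} gdom gpt gmap.
Arguments gdom {X T C x V} _.
Arguments gpt {X T C x V} _.
Arguments gmap {X T C x V} _.
Arguments cs {X T C x y} _ _ _.
Arguments cs_compat {X T C x y} _ _ _ _ _ _.
Arguments comp_assoc {X T} p {U V W Z} h g f.
Arguments comp_id_l {X T} p {U V} f.
Arguments comp_id_r {X T} p {U V} f.
Arguments incl_id {X T} p U H.
Arguments incl_comp {X T} p {U V W} H1 H2 H3.

Section Germs.
Context {X : Type} {T : Topology X} (C : PCat T).

Definition sub_refl (U : Opn T) : sub U U := fun _ h => h.

Lemma comp_incl_restrict (D E W W' : Opn T) (a : hom C D E)
    (H1 : sub W D) (H2 : sub W' W) (H3 : sub W' D) :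
  comp C a (incl C H3) = comp C (comp C a (incl C H1)) (incl C H2).
Proof. now rewrite <- comp_assoc, (incl_comp C H2 H1 H3). Qed.

Lemma germ_eq_refl {x V} (g : Germ C x V) : germ_eq C g g.
Proof. exists (gdom g); split; [apply gpt|]. now exists (sub_refl _), (sub_refl _). Qed.

Lemma germ_eq_sym {x V} (g1 g2 : Germ C x V) : germ_eq C g1 g2 -> germ_eq C g2 g1.
Proof. intros [W [HW [H1 [H2 E]]]]. exists W; split; auto. now exists H2, H1. Qed.

Lemma germ_eq_trans {x V} (g1 g2 g3 : Germ C x V) :
  germ_eq C g1 g2 -> germ_eq C g2 g3 -> germ_eq C g1 g3.
Proof.
  intros [W [HW [H1 [H2 E]]]] [W' [HW' [H2' [H3 E']]]].
  set (WW := opn_inter T W W').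
  assert (S1 : sub WW W) by (intros z [a _]; exact a).
  assert (S2 : sub WW W') by (intros z [_ b]; exact b).
  exists WW; split; [split; auto|].
  exists (fun z h => H1 z (S1 z h)), (fun z h => H3 z (S2 z h)).
  rewrite (comp_incl_restrict _ _ _ _ _ H1 S1 (fun z h => H1 z (S1 z h))), E.
  rewrite <- (comp_incl_restrict _ _ _ _ _ H2 S1 (fun z h => H2' z (S2 z h))).
  rewrite (comp_incl_restrict _ _ _ _ _ H2' S2 (fun z h => H2' z (S2 z h))), E'.
  now rewrite <- (comp_incl_restrict _ _ _ _ _ H3 S2 (fun z h => H3 z (S2 z h))).
Qed.

Definition germ_comp {x E F} (h : hom C E F) (g : Germ C x E) : Germ C x F :=
  mkGerm C (gdom g) (gpt g) (comp C h (gmap g)).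

Lemma germ_eq_comp {x E F} (h : hom C E F) (g1 g2 : Germ C x E) :
  germ_eq C g1 g2 -> germ_eq C (germ_comp h g1) (germ_comp h g2).
Proof.
  intros [W [HW [H1 [H2 Eq]]]]. exists W; split; auto. exists H1, H2; simpl.
  now rewrite <- !comp_assoc, Eq.
Qed.

Lemma germ_eq_pt {x : X} {D E : Opn T} (h1 h2 : D x) (a : hom C D E) :
  germ_eq C (mkGerm C D h1 a) (mkGerm C D h2 a).
Proof. exists D; split; auto. now exists (sub_refl _), (sub_refl _). Qed.

Definition lies_over {x E} (g : Germ C x E) (v : X) : Prop :=
  exists (hv : E v) (r : Costalk C x v), germ_eq C (cs r E hv) g.

Definition maps_to {D E : Opn T} (a : hom C D E) (z v : X) : Prop :=
  exists hz : D z, lies_over (mkGerm C D hz a) v.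

Lemma lies_over_resp {x E} (g g' : Germ C x E) v :
  lies_over g v -> germ_eq C g g' -> lies_over g' v.
Proof. intros [hv [r Hr]] He. exists hv, r. exact (germ_eq_trans _ _ _ Hr He). Qed.

Lemma lies_over_cod {x E} (g : Germ C x E) v : lies_over g v -> E v.
Proof. now intros [hv _]. Qed.

Lemma maps_to_cod {D E : Opn T} (a : hom C D E) z v : maps_to a z v -> E v.
Proof. intros [hz H]; exact (lies_over_cod _ _ H). Qed.

Lemma maps_to_at {D E : Opn T} (a : hom C D E) z v (hz : D z) :
  maps_to a z v -> lies_over (mkGerm C D hz a) v.
Proof. intros [hz' H]. exact (lies_over_resp _ _ _ H (germ_eq_pt _ _ _)). Qed.

Definition id_costalk (z : X) : Costalk C z z.
Proof.
  refine (Build_Costalk C z z (fun V hV => mkGerm C V hV (cid C V)) _).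
  intros V V' hV hV' H. exists V; split; auto. exists (sub_refl V), H; simpl.
  now rewrite (incl_id C V (sub_refl V)), !comp_id_r, comp_id_l.
Defined.

Lemma maps_to_id (D : Opn T) z : D z -> maps_to (cid C D) z z.
Proof. intros hz. exists hz, hz, (id_costalk z). apply germ_eq_refl. Qed.

Lemma germ_eq_near {x V} (g1 g2 : Germ C x V) : germ_eq C g1 g2 ->
  exists O : Opn T, O x /\ sub O (gdom g1) /\ sub O (gdom g2) /\
    forall z v, O z -> (maps_to (gmap g1) z v <-> maps_to (gmap g2) z v).
Proof.
  intros [W [HW [H1 [H2 Eq]]]]. exists W; repeat split; auto.
  - intros [hz Hl]. exists (H2 z H). apply (lies_over_resp _ _ _ Hl).
    exists W; split; auto. now exists H1, H2.
  - intros [hz Hl]. exists (H1 z H). apply (lies_over_resp _ _ _ Hl).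
    exists W; split; auto. now exists H2, H1.
Qed.


Section Condition2.
Hypothesis h2 : cond2 C.

Lemma lies_over_ex {x E} (g : Germ C x E) : exists v, lies_over g v.
Proof.
  destruct (proj1 (h2 E x) g) as [y [hy [p Hp]]]. now exists y, hy, p.
Qed.

Lemma lies_over_unique {x E} (g : Germ C x E) v v' :
  lies_over g v -> lies_over g v' -> v = v'.
Proof.
  intros [hv [r Hr]] [hv' [r' Hr']].
  apply (proj1 (proj2 (h2 E x)) v v' hv hv' r r').
  exact (germ_eq_trans _ _ _ Hr (germ_eq_sym _ _ Hr')).
Qed.

Lemma maps_to_ex {D E : Opn T} (a : hom C D E) z : D z -> exists v, maps_to a z v.
Proof. intros hz. destruct (lies_over_ex (mkGerm C D hz a)) as [v Hv]. now exists v, hz. Qed.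

Lemma maps_to_unique {D E : Opn T} (a : hom C D E) z v v' :
  maps_to a z v -> maps_to a z v' -> v = v'.
Proof.
  intros [hz Hv] Hv'. exact (lies_over_unique _ _ _ Hv (maps_to_at _ _ _ hz Hv')).
Qed.

Lemma lies_over_post {x N E} (H : sub N E) (m : Germ C x N) v :
  lies_over (germ_post C H m) v <-> lies_over m v.
Proof.
  assert (Hfwd : forall v, lies_over m v -> lies_over (germ_post C H m) v).
  { intros w [hw [r Hr]]. exists (H w hw), r.
    apply (germ_eq_trans _ _ _ (germ_eq_sym _ _ (cs_compat r N E hw (H w hw) H))).
    exact (germ_eq_comp (incl C H) _ _ Hr). }
  split; [|apply Hfwd].
  intros Hv. destruct (lies_over_ex m) as [v' Hv'].
  now rewrite (lies_over_unique _ _ _ Hv (Hfwd v' Hv')).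
Qed.

Lemma maps_to_post {D N E : Opn T} (H : sub N E) (a : hom C D N) z v :
  maps_to (comp C (incl C H) a) z v <-> maps_to a z v.
Proof.
  split; intros [hz Hv]; exists hz; now apply (lies_over_post H (mkGerm C D hz a)).
Qed.

Lemma lies_over_factor {x E} (g : Germ C x E) v (N : Opn T) (H : sub N E) :
  lies_over g v -> N v -> exists m : Germ C x N, germ_eq C (germ_post C H m) g.
Proof.
  intros [hv [r Hr]] Nv. exists (cs r N Nv).
  exact (germ_eq_trans _ _ _ (cs_compat r N E Nv hv H) Hr).
Qed.

Lemma costalk_rep_restrict {x y} (p : Costalk C x y) (N E : Opn T) (H : sub N E)
    (hN : N y) (hE : E y) :
  exists O : Opn T, O x /\ forall z v, O z ->
    (maps_to (gmap (cs p N hN)) z v <-> maps_to (gmap (cs p E hE)) z v).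
Proof.
  destruct (germ_eq_near _ _ (cs_compat p N E hN hE H)) as [O [Ox [_ [_ HO]]]].
  exists O; split; auto. intros z v Oz.
  rewrite <- (HO z v Oz). symmetry; apply maps_to_post.
Qed.

Lemma costalk_reps_near {x y} (p : Costalk C x y) (E E' : Opn T) (hE : E y) (hE' : E' y) :
  exists O : Opn T, O x /\ forall z v, O z ->
    (maps_to (gmap (cs p E hE)) z v <-> maps_to (gmap (cs p E' hE')) z v).
Proof.
  set (N := opn_inter T E E').
  destruct (costalk_rep_restrict p N E (fun _ h => proj1 h) (conj hE hE') hE) as [O [Ox HO]].
  destruct (costalk_rep_restrict p N E' (fun _ h => proj2 h) (conj hE hE') hE') as [O' [O'x HO']].
  exists (opn_inter T O O'); split; [split; auto|].
  intros z v [Oz O'z]. rewrite <- (HO z v Oz). exact (HO' z v O'z).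
Qed.

Lemma underlying_ex {D E : Opn T} (a : hom C D E) : exists g : X -> X, underlying_map C a g.
Proof.
  assert (Hpt : forall z, exists v, D z -> maps_to a z v).
  { intro z. destruct (classic (D z)) as [hz|nz].
    - destruct (maps_to_ex a z hz) as [v Hv]. now exists v.
    - now exists z. }
  destruct (functional_choice _ Hpt) as [g Hg].
  exists g. intros z hz. exact (maps_to_at a z (g z) hz (Hg z hz)).
Qed.

Lemma underlying_maps_to {D E : Opn T} (a : hom C D E) (g : X -> X) z :
  underlying_map C a g -> D z -> maps_to a z (g z).
Proof. intros Hg hz. exists hz. exact (Hg z hz). Qed.

Lemma underlying_value {D E : Opn T} (a : hom C D E) (g : X -> X) z v :
  underlying_map C a g -> maps_to a z v -> g z = v.
Proof. intros Hg [hz Hv]. exact (lies_over_unique _ _ _ (Hg z hz) Hv). Qed.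

(* Continuity: if ā(z) ∈ W, the germ a_z factors through E ∩ W, so ā maps a
   neighbourhood of z into W. *)
Lemma underlying_continuous {D E : Opn T} (a : hom C D E) (g : X -> X) :
  underlying_map C a g -> preimages_open T D g.
Proof.
  intros Hg W HW. apply open_local. intros z [hz Wz].
  set (N := opn_inter T E (Build_Opn X T W HW)).
  assert (HNE : sub N E) by (intros ? [? ?]; auto).
  destruct (lies_over_factor _ _ N HNE (Hg z hz) (conj (lies_over_cod _ _ (Hg z hz)) Wz))
    as [m Hm].
  destruct (germ_eq_near _ _ Hm) as [O [Oz [_ [OD HO]]]].
  exists O. split; [apply carrier_open|split; auto].
  intros z' Oz'. split; [exact (OD z' Oz')|].
  assert (Hm' : maps_to (gmap m) z' (g z')).
  { apply (maps_to_post HNE), HO; auto. exact (underlying_maps_to a g z' Hg (OD z' Oz')). }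
  exact (proj2 (maps_to_cod _ _ _ Hm')).
Qed.

Section T1Space.
Hypothesis hT1 : T1 T.

(* Functoriality: the underlying map of h ∘ k is h̄ ∘ k̄.  If (h ∘ k)_z lay over
   v' ≠ v, a T1-neighbourhood N of v avoiding v' would make h_w, and then
   (h ∘ k)_z, factor through N, forcing v' ∈ N. *)
Lemma maps_to_comp {D E F : Opn T} (k : hom C D E) (h : hom C E F) z w v :
  maps_to k z w -> maps_to h w v -> maps_to (comp C h k) z v.
Proof.
  intros [hz Hk] [hw Hh]. exists hz.
  destruct (lies_over_ex (mkGerm C D hz (comp C h k))) as [v' Hv'].
  destruct (classic (v = v')) as [->|Hne]; [exact Hv'|exfalso].
  destruct (hT1 v v' Hne) as [N0 [HN0 [N0v N0v']]].
  set (N := opn_inter T F (Build_Opn X T N0 HN0)).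
  assert (HNF : sub N F) by (intros ? [? ?]; auto).
  destruct (lies_over_factor _ _ N HNF Hh (conj (lies_over_cod _ _ Hh) N0v))
    as [m [W [HW [H1 [H2 Em]]]]].
  change (sub W (gdom m)) in H1. change (sub W E) in H2.
  destruct (lies_over_factor _ _ W H2 Hk HW) as [m' Hm'].
  assert (Eqn : comp C h (comp C (incl C H2) (gmap m'))
              = comp C (incl C HNF) (comp C (gmap m) (comp C (incl C H1) (gmap m')))).
  { simpl in Em. now rewrite !comp_assoc, Em. }
  assert (Hover : lies_over (germ_post C HNF
            (mkGerm C (gdom m') (gpt m') (comp C (gmap m) (comp C (incl C H1) (gmap m'))))) v').
  { apply (lies_over_resp _ _ _ Hv').
    apply (germ_eq_trans _ _ _ (germ_eq_comp h _ _ (germ_eq_sym _ _ Hm'))).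
    unfold germ_comp, germ_post; simpl. rewrite Eqn. apply germ_eq_refl. }
  apply lies_over_post, lies_over_cod in Hover. exact (N0v' (proj2 Hover)).
Qed.

Lemma maps_to_comp_inv {D E F : Opn T} (k : hom C D E) (h : hom C E F) z w v :
  maps_to (comp C h k) z v -> maps_to k z w -> maps_to h w v.
Proof.
  intros Hhk Hk. destruct (maps_to_ex h w (maps_to_cod _ _ _ Hk)) as [v' Hv'].
  now rewrite (maps_to_unique _ _ _ _ Hhk (maps_to_comp k h z w v' Hk Hv')).
Qed.

(* If q ∘ p = 1_x in C^*, then near x the representative k of q_W is a left
   inverse of the representative of p_E: unfolding the W-component of q ∘ p
   as k ∘ (representative of p_D) and applying functoriality. *)
Lemma local_left_inverse {x y} (p : Costalk C x y) (q : Costalk C y x)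
    (hqp : forall W hW, germ_eq C (star_comp_at C q p W hW) (star_id_at C x W hW))
    (W E : Opn T) (hW : W x) (hE : E y) :
  exists O : Opn T, O x /\ forall z, O z -> exists w,
    maps_to (gmap (cs p E hE)) z w /\ maps_to (gmap (cs q W hW)) w z.
Proof.
  set (k := cs q W hW).
  set (s := cs p (gdom k) (gpt k)).
  destruct (germ_eq_near _ _ (hqp W hW)) as [O1 [O1x [O1s [O1W Hid]]]].
  destruct (costalk_reps_near p (gdom k) E (gpt k) hE) as [O2 [O2x Hrep]].
  exists (opn_inter T O1 O2); split; [split; auto|].
  intros z [O1z O2z].
  assert (Hzz : maps_to (comp C (gmap k) (gmap s)) z z).
  { apply (Hid z z O1z). exact (maps_to_id W z (O1W z O1z)). }
  destruct (maps_to_ex (gmap s) z (O1s z O1z)) as [w Hw].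
  exists w; split.
  - exact (proj1 (Hrep z w O2z) Hw).
  - exact (maps_to_comp_inv _ _ z w z Hzz Hw).
Qed.

Hypothesis h3 : cond3 C.

(* The local homeomorphism property: with p ∈ C_x^{f̄ x} representing f_x and
   q its inverse, the underlying map beta of a representative k of q_U is
   inverse to f̄ near x (left inverse, from q ∘ p = 1) and near f̄ x (right
   inverse, from p ∘ q = 1, using that p_V agrees with f near x). *)
Lemma underlying_local_homeo (U V : Opn T) (f : hom C U V) (g : X -> X)
    (Hg : underlying_map C f g) (x : X) (hx : U x) :
  exists U' : X -> Prop,
    is_open T U' /\ U' x /\ (forall z, U' z -> U z) /\
    let I := fun y => exists z, U' z /\ g z = y in
    is_open T I /\
    exists h : X -> X,
      (forall z, U' z -> h (g z) = z) /\
      (forall y, I y -> U' (h y) /\ g (h y) = y) /\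
      (forall W, is_open T W -> is_open T (fun z => U' z /\ W (g z))) /\
      (forall W, is_open T W -> is_open T (fun y => I y /\ W (h y))).
Proof.
  destruct (Hg x hx) as [hy [p Hp]].
  destruct (h3 x (g x) p) as [q [Hqp Hpq]].
  set (k := cs q U hx).
  destruct (underlying_ex (gmap k)) as [beta Hbeta].
  destruct (germ_eq_near _ _ Hp) as [Of [Ofx [_ [OfU Hf]]]].
  destruct (local_left_inverse p q Hqp U V hx hy) as [OL [OLx HL]].
  destruct (local_left_inverse q p Hpq V U hy hx) as [OR [ORy HR]].
  set (N := fun z => OL z /\ Of z).
  assert (Hleft : forall z, N z -> beta (g z) = z).
  { intros z [OLz Ofz]. destruct (HL z OLz) as [w [Hzw Hwz]].
    apply (Hf z w Ofz) in Hzw.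
    rewrite (underlying_value f g z w Hg Hzw). exact (underlying_value _ beta w z Hbeta Hwz). }
  set (M := fun w => OR w /\ (gdom k w /\ N (beta w))).
  assert (Hright : forall w, M w -> N (beta w) /\ g (beta w) = w).
  { intros w [ORw [_ Nbw]]. split; [exact Nbw|].
    destruct (HR w ORw) as [z [Hwz Hzw]].
    rewrite (underlying_value _ beta w z Hbeta Hwz) in Nbw |- *.
    apply (Hf z w (proj2 Nbw)) in Hzw. exact (underlying_value f g z w Hg Hzw). }
  assert (Nx : N x) by (split; auto).
  apply (local_inverse_homeo T U (gdom k) N M g beta x).
  - exact (underlying_continuous f g Hg).
  - exact (underlying_continuous _ beta Hbeta).
  - apply open_inter; apply carrier_open.
  - apply open_inter; [apply carrier_open|]. apply (underlying_continuous _ beta Hbeta).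
    apply open_inter; apply carrier_open.
  - exact Nx.
  - split; [exact ORy|split; [exact (gpt k)|]]. now rewrite Hleft.
  - intros z [_ Ofz]; exact (OfU z Ofz).
  - intros w [_ [kw _]]; exact kw.
  - exact Hleft.
  - exact Hright.
Qed.

End T1Space.

End Condition2.

End Germs.

Theorem mainTheorem3 (X : Type) (T : Topology X) (C : PCat T)
    (hT1 : T1 T) (hC : pre_pseudogroup C)
    (U V : Opn T) (f : hom C U V) :
  (exists g : X -> X, underlying_map C f g) /\
  (forall g : X -> X, underlying_map C f g ->
     continuous_on T U V g /\ local_homeo T U V g).
Proof.
  destruct hC as [h2 h3]. split; [exact (underlying_ex C h2 f)|].
  intros g Hg.
  assert (Hcod : forall z, U z -> V (g z))
    by (intros z hz; exact (maps_to_cod C f z (g z) (underlying_maps_to C f g z Hg hz))).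
  split; split; [exact Hcod| |exact Hcod|].
  - exact (underlying_continuous C h2 f g Hg).
  - exact (underlying_local_homeo C h2 hT1 h3 U V f g Hg).
Qed.
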